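(* There is an absolute constant $c_1>0$ such that for each $b\in(0,\pi]$, each $n\in\mathbb{N}$ and every trigonometric polynomial $T_n\in\mathcal{T}_n$, $$\|F_1-T_n\|_{[-b,b]}\ge \frac{c_1 b}{n},$$ where $F_1(x)=|x|$. Moreover one can take $c_1\ge (80c_0)^{-1}$, where $c_0<10$ is an absolute constant such that $\|T_n'\|_{[-b/2,b/2]}\le \frac{c_0}{b}n\|T_n\|_{[-b,b]}$ for all $b\in(0,\pi)$, $n\in\mathbb{N}$ and all odd $T_n\in\mathcal{T}_n$.
   Context: $\mathcal{T}_n$ is the space of real trigonometric polynomials of degree $\le n$. For a function $g$ on $[a,b]$, $\|g\|_{[a,b]}:=\max_{x\in[a,b]}|g(x)|$. *)

From Stdlib Require Import Reals.
From Coquelicot Require Import Coquelicot.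
Open Scope R_scope.

(* T is a real trigonometric polynomial of degree <= n:
   T x = a_0 + sum_{k=1}^n (a_k cos (k x) + b_k sin (k x)).
   (The k = 0 term of the sum below is a 0 * cos 0 + b 0 * sin 0 = a 0.) *)
Definition trig_poly (n : nat) (T : R -> R) : Prop :=
  exists a b : nat -> R, forall x : R,
    T x = sum_f_R0 (fun k => a k * cos (INR k * x) + b k * sin (INR k * x)) n.

Definition supnorm (g : R -> R) (a b : R) : R :=
  real (Lub_Rbar (fun y => exists x, a <= x <= b /\ y = Rabs (g x))).

Definition odd_fun (T : R -> R) : Prop := forall x, T (- x) = - T x.

Definition bernstein_const (c0 : R) : Prop :=
  forall (b : R) (n : nat) (T : R -> R),
    0 < b < PI -> (1 <= n)%nat -> trig_poly n T -> odd_fun T ->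
    supnorm (Derive T) (- b / 2) (b / 2) <= c0 / b * INR n * supnorm T (- b) b.

(* Let E = ||F_1 - T||_[-b,b].  The even part S y = (T y + T (- y)) / 2 of T is a cosine
   polynomial with |S y - |y|| <= E on [-b, b].

   With a Bernstein constant c0: W x = S (x + h) - S (x - h) is an odd trigonometric
   polynomial with |W| <= 2 h + 2 E on [-(b - h), b - h] and W h >= 2 h - 2 E.  For
   h = b / (2 c0 n + 1) the mean value theorem and the Bernstein inequality on [0, h] give
   W h <= h + E, so E >= h / 3.

   Without it: substituting y = 2 asin (s sin x), s = b / 40, turns S into a cosine
   polynomial of degree 2 n in x that approximates 2 asin (s sin x) ~ 2 s sin x within E on
   [0, PI].  The trapezoid rule with 8 n panels, weighted by cos (8 n x) K(x)^2 where
   K x = sum_{l < n} cos ((2 l + 1) x), annihilates that cosine polynomial exactly, while the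
   weight has mass 4 n^2 and pairs with sin x to at most - n PI / 32; hence E >= s / (32 n). *)

From Stdlib Require Import Reals Lra Lia FunctionalExtensionality.
From Coquelicot Require Import Coquelicot.
Open Scope R_scope.

Lemma supnorm_between (g : R -> R) (a b M x : R) :
  (forall y, a <= y <= b -> Rabs (g y) <= M) -> a <= x <= b ->
  Rabs (g x) <= supnorm g a b <= M.
Proof.
  intros HM Hx. unfold supnorm.
  set (vals := fun y => exists x, a <= x <= b /\ y = Rabs (g x)).
  destruct (Lub_Rbar_correct vals) as [Hub Hlub].
  assert (Hle : Rbar_le (Lub_Rbar vals) (Finite M)).
  { apply Hlub. intros y [z [Hz ->]]. now apply HM. }
  assert (Hge : Rbar_le (Finite (Rabs (g x))) (Lub_Rbar vals)).
  { apply Hub. now exists x. }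
  destruct (Lub_Rbar vals); simpl in *; tauto.
Qed.

Lemma Rabs_le_supnorm (g : R -> R) (a b M x : R) :
  (forall y, a <= y <= b -> Rabs (g y) <= M) -> a <= x <= b ->
  Rabs (g x) <= supnorm g a b.
Proof. intros HM Hx. apply (supnorm_between g a b M x HM Hx). Qed.

Lemma supnorm_le (g : R -> R) (a b M : R) :
  a <= b -> (forall y, a <= y <= b -> Rabs (g y) <= M) -> supnorm g a b <= M.
Proof. intros Hab HM. apply (supnorm_between g a b M a HM). lra. Qed.

Lemma trig_poly_ext n f g : trig_poly n f -> (forall x, g x = f x) -> trig_poly n g.
Proof. intros [a [b Hf]] E. exists a, b. intro x. now rewrite E. Qed.

Lemma trig_poly_bounded n T : trig_poly n T -> exists M, forall x, Rabs (T x) <= M.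
Proof.
  intros [a [b HT]]. exists (sum_f_R0 (fun k => Rabs (a k) + Rabs (b k)) n).
  intro x. rewrite HT. eapply Rle_trans; [apply Rabs_triang_gen|].
  apply sum_Rle. intros k _. eapply Rle_trans; [apply Rabs_triang|].
  rewrite !Rabs_mult.
  assert (Hc := COS_bound (INR k * x)). assert (Hs := SIN_bound (INR k * x)).
  assert (Rabs (cos (INR k * x)) <= 1) by (apply Rabs_le; lra).
  assert (Rabs (sin (INR k * x)) <= 1) by (apply Rabs_le; lra).
  assert (0 <= Rabs (a k)) by apply Rabs_pos. assert (0 <= Rabs (b k)) by apply Rabs_pos.
  nra.
Qed.

Lemma trig_poly_lin n f g p q : trig_poly n f -> trig_poly n g ->
  trig_poly n (fun x => p * f x + q * g x).
Proof.
  intros [a [b Hf]] [a' [b' Hg]].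
  exists (fun k => p * a k + q * a' k), (fun k => p * b k + q * b' k).
  intro x. rewrite Hf, Hg, !scal_sum, <- sum_plus. apply sum_eq. intros; ring.
Qed.

Lemma trig_poly_opp_arg n f : trig_poly n f -> trig_poly n (fun x => f (- x)).
Proof.
  intros [a [b Hf]]. exists a, (fun k => - b k). intro x. rewrite Hf. apply sum_eq.
  intros k _. replace (INR k * - x) with (- (INR k * x)) by ring.
  rewrite cos_neg, sin_neg. ring.
Qed.

Lemma trig_poly_shift n f c : trig_poly n f -> trig_poly n (fun x => f (x + c)).
Proof.
  intros [a [b Hf]].
  exists (fun k => a k * cos (INR k * c) + b k * sin (INR k * c)),
         (fun k => - a k * sin (INR k * c) + b k * cos (INR k * c)).
  intro x. rewrite Hf. apply sum_eq. intros k _.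
  replace (INR k * (x + c)) with (INR k * x + INR k * c) by ring.
  rewrite cos_plus, sin_plus. ring.
Qed.

Lemma trig_poly_derive n f : trig_poly n f ->
  exists f', trig_poly n f' /\ forall x, is_derive f x (f' x).
Proof.
  intros [a [b Hf]].
  exists (fun x => sum_f_R0 (fun k => INR k * b k * cos (INR k * x)
                                     + - INR k * a k * sin (INR k * x)) n).
  split; [now exists (fun k => INR k * b k), (fun k => - INR k * a k)|].
  intro x. eapply is_derive_ext; [intro; symmetry; apply Hf|]. clear Hf.
  induction n as [|n IH]; simpl.
  - auto_derive; [easy|ring].
  - apply (is_derive_plus
      (fun x => sum_f_R0 (fun k => a k * cos (INR k * x) + b k * sin (INR k * x)) n));
      [exact IH|].
    auto_derive; [easy|ring].
Qed.

Definition even_part (T : R -> R) (y : R) : R := (T y + T (- y)) / 2.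

Lemma trig_poly_even_part n T : trig_poly n T ->
  exists a : nat -> R, forall y, even_part T y = sum_f_R0 (fun k => a k * cos (INR k * y)) n.
Proof.
  intros [a [b HT]]. exists a. intro y. unfold even_part.
  rewrite !HT, <- sum_plus. unfold Rdiv. rewrite Rmult_comm, scal_sum.
  apply sum_eq. intros k _.
  replace (INR k * - y) with (- (INR k * y)) by ring. rewrite cos_neg, sin_neg. field.
Qed.

Lemma Rabs_abs_sub_trig_le_supnorm n T b y : trig_poly n T -> - b <= y <= b ->
  Rabs (Rabs y - T y) <= supnorm (fun x => Rabs x - T x) (- b) b.
Proof.
  intros HT Hy. destruct (trig_poly_bounded n T HT) as [MT HMT].
  apply (Rabs_le_supnorm (fun x => Rabs x - T x) _ _ (b + MT)); [|exact Hy].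
  intros z Hz. eapply Rle_trans; [apply Rabs_triang|].
  rewrite Rabs_Ropp, Rabs_Rabsolu. apply Rplus_le_compat; [apply Rabs_le; lra|apply HMT].
Qed.

Lemma even_part_error (T : R -> R) (b E y : R) :
  (forall y, - b <= y <= b -> Rabs (Rabs y - T y) <= E) -> - b <= y <= b ->
  Rabs (even_part T y - Rabs y) <= E.
Proof.
  intros HE Hy. unfold even_part.
  assert (H1 := HE y Hy). assert (H2 := HE (- y) ltac:(lra)). rewrite Rabs_Ropp in H2.
  apply Rabs_le_between in H1. apply Rabs_le_between in H2. apply Rabs_le. lra.
Qed.

Lemma trig_poly_even_part_shift_diff n T h : trig_poly n T ->
  trig_poly n (fun x => even_part T (x + h) - even_part T (x - h)).
Proof.
  intro HT. assert (HTo := trig_poly_opp_arg n T HT).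
  apply (trig_poly_ext n (fun x => / 2 * (1 * T (x + h) + 1 * T (- (x + h)))
                                 + - / 2 * (1 * T (x + - h) + 1 * T (- (x + - h))))).
  - apply trig_poly_lin; apply trig_poly_lin;
      first [now apply trig_poly_shift | now apply (trig_poly_shift n (fun x => T (- x)))].
  - intro x. unfold even_part. replace (x + - h) with (x - h) by ring. field.
Qed.

Lemma odd_fun_even_part_shift_diff T h :
  odd_fun (fun x => even_part T (x + h) - even_part T (x - h)).
Proof.
  intro x. unfold even_part. replace (- x + h) with (- (x - h)) by ring.
  replace (- x - h) with (- (x + h)) by ring. rewrite !Ropp_involutive. field.
Qed.

Lemma cos_INR_PI p : cos (INR p * PI) = (-1) ^ p.
Proof.
  induction p as [|p IH]; [simpl; rewrite Rmult_0_l; apply cos_0|].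
  rewrite S_INR, Rmult_plus_distr_r, Rmult_1_l, neg_cos, IH. simpl. ring.
Qed.

Lemma sin_INR_PI p : sin (INR p * PI) = 0.
Proof.
  induction p as [|p IH]; [simpl; rewrite Rmult_0_l; apply sin_0|].
  rewrite S_INR, Rmult_plus_distr_r, Rmult_1_l, neg_sin, IH. ring.
Qed.

Lemma sin_INR_PI_plus p y : sin (INR p * PI + y) = (-1) ^ p * sin y.
Proof. rewrite sin_plus, sin_INR_PI, cos_INR_PI. ring. Qed.

Lemma cos_mul_cos a b : cos a * cos b = (cos (a + b) + cos (a - b)) / 2.
Proof. rewrite cos_plus, cos_minus. field. Qed.

Lemma cos_mul_sin a c : cos a * sin c = (sin (c + a) + sin (c - a)) / 2.
Proof. rewrite sin_plus, sin_minus. field. Qed.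

Lemma sum_cos_telescope beta N :
  2 * sin (beta / 2) * sum_f_R0 (fun k => cos (INR k * beta)) N
  = sin ((INR N + / 2) * beta) + sin (beta / 2).
Proof.
  induction N as [|N IH].
  - simpl. rewrite Rmult_0_l, cos_0. replace ((0 + / 2) * beta) with (beta / 2) by field. ring.
  - rewrite tech5, Rmult_plus_distr_l, IH, S_INR.
    replace ((INR N + 1 + / 2) * beta) with ((INR N + 1) * beta + beta / 2) by field.
    replace ((INR N + / 2) * beta) with ((INR N + 1) * beta - beta / 2) by field.
    rewrite sin_plus, sin_minus. ring.
Qed.

Lemma sum_alt_sin_telescope beta N :
  2 * cos (beta / 2) * sum_f_R0 (fun k => cos (INR k * PI) * sin (INR k * beta)) N
  = cos (INR N * PI) * sin ((INR N + / 2) * beta) - sin (beta / 2).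
Proof.
  induction N as [|N IH].
  - simpl. rewrite !Rmult_0_l, cos_0, sin_0.
    replace ((0 + / 2) * beta) with (beta / 2) by field. ring.
  - rewrite tech5, Rmult_plus_distr_l, IH, S_INR.
    replace ((INR N + 1) * PI) with (INR N * PI + PI) by ring. rewrite neg_cos.
    replace ((INR N + 1 + / 2) * beta) with ((INR N + 1) * beta + beta / 2) by field.
    replace ((INR N + / 2) * beta) with ((INR N + 1) * beta - beta / 2) by field.
    rewrite sin_plus, sin_minus. ring.
Qed.

(* [trapezoid M f] is [M / PI] times the trapezoidal rule for the integral of [f]
   over [0, PI] with [M] panels. *)
Definition node (M k : nat) : R := INR k * PI / INR M.

Definition trapezoid (M : nat) (f : R -> R) : R :=
  sum_f_R0 (fun k => f (node M k)) M - (f (node M 0) + f (node M M)) / 2.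

Lemma node_0 M : node M 0 = 0.
Proof. unfold node. simpl. unfold Rdiv. ring. Qed.

Lemma node_last M : (1 <= M)%nat -> node M M = PI.
Proof. intro H. unfold node. field. apply not_0_INR. lia. Qed.

Lemma node_range M k : (1 <= M)%nat -> (k <= M)%nat -> 0 <= node M k <= PI.
Proof.
  intros HM Hk. unfold node.
  assert (0 < INR M) by (apply lt_0_INR; lia).
  assert (INR k <= INR M) by (apply le_INR; lia).
  assert (0 <= INR k) by apply pos_INR. assert (0 < PI) by apply PI_RGT_0.
  split.
  - apply Rmult_le_pos; [nra|]. left. now apply Rinv_0_lt_compat.
  - apply (Rmult_le_reg_r (INR M)); [easy|]. field_simplify; nra.
Qed.

Lemma trapezoid_ext M f g : (forall x, f x = g x) -> trapezoid M f = trapezoid M g.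
Proof. intro E. now rewrite (functional_extensionality f g E). Qed.

Lemma trapezoid_lin M f g p q :
  trapezoid M (fun x => p * f x + q * g x) = p * trapezoid M f + q * trapezoid M g.
Proof.
  unfold trapezoid. rewrite sum_plus.
  rewrite (sum_eq (fun k => p * f (node M k)) (fun k => f (node M k) * p)) by (intros; ring).
  rewrite (sum_eq (fun k => q * g (node M k)) (fun k => g (node M k) * q)) by (intros; ring).
  rewrite <- !scal_sum. field.
Qed.

Lemma trapezoid_add M f g : trapezoid M (fun x => f x + g x) = trapezoid M f + trapezoid M g.
Proof.
  rewrite (trapezoid_ext M _ (fun x => 1 * f x + 1 * g x)) by (intro; ring).
  rewrite trapezoid_lin. ring.
Qed.

Lemma trapezoid_scal M f p : trapezoid M (fun x => p * f x) = p * trapezoid M f.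
Proof.
  rewrite (trapezoid_ext M _ (fun x => p * f x + 0 * f x)) by (intro; ring).
  rewrite trapezoid_lin. ring.
Qed.

Lemma trapezoid_sum M (g : nat -> R -> R) N :
  trapezoid M (fun x => sum_f_R0 (fun i => g i x) N) = sum_f_R0 (fun i => trapezoid M (g i)) N.
Proof. induction N as [|N IH]; [easy|]. simpl. now rewrite trapezoid_add, IH. Qed.

Lemma trapezoid_const M c : trapezoid M (fun _ => c) = c * INR M.
Proof. unfold trapezoid. rewrite sum_cte, S_INR. field. Qed.

Lemma trapezoid_le M f g : (1 <= M)%nat ->
  (forall x, 0 <= x <= PI -> f x <= g x) -> trapezoid M f <= trapezoid M g.
Proof.
  intros HM Hfg.
  assert (Hk : forall k, (k <= M)%nat -> f (node M k) <= g (node M k))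
    by (intros k Hk; apply Hfg, node_range; lia).
  assert (H0 := Hk 0%nat ltac:(lia)). assert (HMM := Hk M ltac:(lia)).
  unfold trapezoid. destruct M as [|[|m]]; [lia|simpl; lra|].
  rewrite 2!(tech5 _ (S m)), 2!(decomp_sum _ (S m)) by lia. simpl pred.
  assert (sum_f_R0 (fun i => f (node (S (S m)) (S i))) m
          <= sum_f_R0 (fun i => g (node (S (S m)) (S i))) m) by (apply sum_Rle; intros; apply Hk; lia).
  lra.
Qed.

Lemma trapezoid_abs_le M f g : (1 <= M)%nat ->
  (forall x, 0 <= x <= PI -> Rabs (f x) <= g x) -> Rabs (trapezoid M f) <= trapezoid M g.
Proof.
  intros HM Hfg. apply Rabs_le. split.
  - replace (- trapezoid M g) with (trapezoid M (fun x => -1 * g x))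
      by (rewrite trapezoid_scal; ring).
    apply trapezoid_le; [easy|]. intros x Hx. specialize (Hfg x Hx).
    apply Rabs_le_between in Hfg. lra.
  - apply trapezoid_le; [easy|]. intros x Hx. specialize (Hfg x Hx).
    apply Rabs_le_between in Hfg. lra.
Qed.

Lemma trapezoid_cos M p : (0 < p)%nat -> (p < 2 * M)%nat ->
  trapezoid M (fun x => cos (INR p * x)) = 0.
Proof.
  intros Hp0 HpM. set (beta := INR p * PI / INR M).
  assert (HM : 0 < INR M) by (apply lt_0_INR; lia).
  assert (Hp : 0 < INR p) by (apply lt_0_INR; lia).
  assert (Hp2 : INR p < 2 * INR M)
    by (replace 2 with (INR 2) by reflexivity; rewrite <- mult_INR; apply lt_INR; lia).
  assert (Hsin : 0 < sin (beta / 2)).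
  { replace (beta / 2) with (INR p / (2 * INR M) * PI) by (unfold beta; field; lra).
    assert (0 < INR p / (2 * INR M) < 1).
    { split; [apply Rdiv_lt_0_compat; lra|].
      apply (Rmult_lt_reg_r (2 * INR M)); [lra|]. field_simplify; lra. }
    assert (0 < PI) by apply PI_RGT_0. apply sin_gt_0; nra. }
  unfold trapezoid. rewrite (sum_eq _ (fun k => cos (INR k * beta)))
    by (intros k _; unfold node, beta; f_equal; field; lra).
  apply (Rmult_eq_reg_l (2 * sin (beta / 2))); [|lra].
  rewrite Rmult_minus_distr_l, sum_cos_telescope, Rmult_0_r.
  replace ((INR M + / 2) * beta) with (INR p * PI + beta / 2) by (unfold beta; field; lra).
  rewrite sin_INR_PI_plus, node_0, node_last by lia.
  rewrite Rmult_0_r, cos_0, cos_INR_PI. field.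
Qed.

Lemma trapezoid_cos_mul_sin M q : Nat.Even M -> Nat.Odd q -> (q < M)%nat ->
  trapezoid M (fun x => cos (INR M * x) * sin (INR q * x)) = - tan (INR q * PI / (2 * INR M)).
Proof.
  intros [j ->] [i ->] Hq. set (M := (2 * j)%nat) in *. set (q := (2 * i + 1)%nat) in *.
  set (beta := INR q * PI / INR M).
  assert (HM : 0 < INR M) by (apply lt_0_INR; lia).
  assert (Hq0 : 0 <= INR q) by apply pos_INR.
  assert (HqM : INR q < INR M) by (apply lt_INR; lia).
  assert (HPI : 0 < PI) by apply PI_RGT_0.
  assert (Hcos : 0 < cos (beta / 2)).
  { replace (beta / 2) with (INR q / (2 * INR M) * PI) by (unfold beta; field; lra).
    assert (0 <= INR q / (2 * INR M) < / 2).
    { split; [apply Rmult_le_pos; [lra|left; apply Rinv_0_lt_compat; lra]|].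
      apply (Rmult_lt_reg_r (2 * INR M)); [lra|]. field_simplify; lra. }
    apply cos_gt_0; nra. }
  replace (INR q * PI / (2 * INR M)) with (beta / 2) by (unfold beta; field; lra).
  unfold trapezoid, tan.
  rewrite (sum_eq _ (fun k => cos (INR k * PI) * sin (INR k * beta)))
    by (intros k _; unfold node, beta; f_equal; f_equal; field; lra).
  rewrite node_0, node_last by lia. rewrite !Rmult_0_r, sin_0, sin_INR_PI, !Rmult_0_r.
  apply (Rmult_eq_reg_l (2 * cos (beta / 2))); [|lra].
  replace (2 * cos (beta / 2) * (- (sin (beta / 2) / cos (beta / 2))))
    with (- (2 * sin (beta / 2))) by (field; lra).
  rewrite Rplus_0_r, Rdiv_0_l, Rminus_0_r, sum_alt_sin_telescope.
  replace ((INR M + / 2) * beta) with (INR q * PI + beta / 2) by (unfold beta; field; lra).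
  rewrite sin_INR_PI_plus, !cos_INR_PI.
  unfold M, q. rewrite Nat.add_1_r, pow_1_even, pow_1_odd. ring.
Qed.

Lemma sin_ge_half u : 0 <= u <= 1 -> u / 2 <= sin u.
Proof.
  intro Hu. assert (HPI := PI2_3_2).
  destruct (sin_bound u 0 ltac:(lra) ltac:(lra)) as [Hlow _].
  unfold sin_approx, sin_term in Hlow. simpl in Hlow. nra.
Qed.

Lemma trapezoid_cos_mul_sin_le M q : Nat.Even M -> Nat.Odd q -> (2 * q <= M)%nat ->
  trapezoid M (fun x => cos (INR M * x) * sin (INR q * x)) <= - (INR q * PI / (4 * INR M)).
Proof.
  intros HM Hq HqM. assert (Hq0 : (0 < q)%nat) by (destruct Hq; lia).
  rewrite trapezoid_cos_mul_sin by (auto; lia).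
  set (u := INR q * PI / (2 * INR M)).
  assert (HMr : 0 < INR M) by (apply lt_0_INR; lia).
  assert (Hu : 0 <= u <= 1).
  { assert (2 * INR q <= INR M)
      by (replace 2 with (INR 2) by reflexivity; rewrite <- mult_INR; apply le_INR; lia).
    assert (0 <= INR q) by apply pos_INR. assert (H4 := PI_4).
    unfold u. split.
    - apply Rmult_le_pos; [assert (0 < PI) by apply PI_RGT_0; nra|].
      left; apply Rinv_0_lt_compat; lra.
    - apply (Rmult_le_reg_r (2 * INR M)); [lra|]. field_simplify; nra. }
  assert (Hsin := sin_ge_half u Hu).
  assert (Hcos : 0 < cos u) by (apply cos_gt_0; assert (H := PI2_3_2); lra).
  assert (Hcos1 : cos u <= 1) by apply COS_bound.
  assert (sin u <= tan u).
  { unfold tan. apply (Rmult_le_reg_r (cos u)); [easy|].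
    replace (sin u / cos u * cos u) with (sin u) by (field; lra). nra. }
  replace (INR q * PI / (4 * INR M)) with (u / 2) by (unfold u; field; lra). lra.
Qed.

Inductive cos_poly (m : nat) : (R -> R) -> Prop :=
  | cos_poly_0 : cos_poly m (fun _ => 0)
  | cos_poly_cons a j f : (j <= m)%nat -> cos_poly m f ->
      cos_poly m (fun x => a * cos (INR j * x) + f x).

Lemma cos_poly_ext m f g : cos_poly m f -> (forall x, f x = g x) -> cos_poly m g.
Proof. intros Hf E. now rewrite <- (functional_extensionality f g E). Qed.

Lemma cos_poly_monom m a j : (j <= m)%nat -> cos_poly m (fun x => a * cos (INR j * x)).
Proof.
  intro Hj. apply (cos_poly_ext m (fun x => a * cos (INR j * x) + 0)); [|intro; ring].
  apply cos_poly_cons; [easy|apply cos_poly_0].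
Qed.

Lemma cos_poly_const m c : cos_poly m (fun _ => c).
Proof.
  apply (cos_poly_ext m (fun x => c * cos (INR 0 * x))); [apply cos_poly_monom; lia|].
  intro x. simpl. rewrite Rmult_0_l, cos_0. ring.
Qed.

Lemma cos_poly_add m f g : cos_poly m f -> cos_poly m g -> cos_poly m (fun x => f x + g x).
Proof.
  intros Hf Hg. induction Hf as [|a j f Hj Hf IH].
  - apply (cos_poly_ext m g); [easy|intro; ring].
  - apply (cos_poly_ext m (fun x => a * cos (INR j * x) + (f x + g x))); [|intro; ring].
    now apply cos_poly_cons.
Qed.

Lemma cos_poly_scal m f c : cos_poly m f -> cos_poly m (fun x => c * f x).
Proof.
  intro Hf. induction Hf as [|a j f Hj Hf IH].
  - apply (cos_poly_ext m (fun _ => 0)); [apply cos_poly_0|intro; ring].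
  - apply (cos_poly_ext m (fun x => c * a * cos (INR j * x) + c * f x)); [|intro; ring].
    now apply cos_poly_cons.
Qed.

Lemma cos_poly_le m m' f : (m <= m')%nat -> cos_poly m f -> cos_poly m' f.
Proof.
  intros Hm Hf. induction Hf as [|a j f Hj Hf IH]; constructor; auto; lia.
Qed.

Lemma cos_INR_mul_cos_INR i j x : (j <= i)%nat ->
  cos (INR i * x) * cos (INR j * x) = (cos (INR (i + j) * x) + cos (INR (i - j) * x)) / 2.
Proof.
  intro Hji. rewrite cos_mul_cos, plus_INR, minus_INR by easy. f_equal. f_equal; f_equal; ring.
Qed.

Lemma cos_poly_mul_cos m c f : cos_poly m f -> cos_poly (m + c) (fun x => cos (INR c * x) * f x).
Proof.
  intro Hf. induction Hf as [|a j f Hj Hf IH].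
  - apply (cos_poly_ext _ (fun _ => 0)); [apply cos_poly_0|intro; ring].
  - assert (Hprod : exists d, (d <= m + c)%nat /\ forall x,
      cos (INR c * x) * cos (INR j * x) = (cos (INR (c + j) * x) + cos (INR d * x)) / 2).
    { destruct (Nat.le_ge_cases j c) as [H|H].
      - exists (c - j)%nat. split; [lia|]. intro x. now apply cos_INR_mul_cos_INR.
      - exists (j - c)%nat. split; [lia|]. intro x.
        rewrite Rmult_comm, cos_INR_mul_cos_INR, Nat.add_comm by easy. reflexivity. }
    destruct Hprod as [d [Hd Hprod]].
    apply (cos_poly_ext _ (fun x => (a / 2 * cos (INR (c + j) * x) + a / 2 * cos (INR d * x))
                                    + cos (INR c * x) * f x)).
    + apply cos_poly_add; [apply cos_poly_add|exact IH]; apply cos_poly_monom; lia.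
    + intro x. rewrite Rmult_plus_distr_l, <- Rmult_assoc, (Rmult_comm _ a), Rmult_assoc, Hprod.
      field.
Qed.

Lemma trapezoid_cos_mul_cos_poly M m g : (m < M)%nat -> cos_poly m g ->
  trapezoid M (fun x => cos (INR M * x) * g x) = 0.
Proof.
  intros HmM Hg. induction Hg as [|a j g Hj Hg IH].
  - rewrite (trapezoid_ext M _ (fun _ => 0)) by (intro; ring). rewrite trapezoid_const. ring.
  - rewrite (trapezoid_ext M _ (fun x => a / 2 * cos (INR (M + j) * x)
                                       + a / 2 * cos (INR (M - j) * x)
                                       + cos (INR M * x) * g x)).
    + rewrite !trapezoid_add, !trapezoid_scal, !trapezoid_cos, IH by lia. ring.
    + intro x. rewrite Rmult_plus_distr_l, <- Rmult_assoc, (Rmult_comm _ a), Rmult_assoc.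
      rewrite cos_INR_mul_cos_INR by lia. field.
Qed.

Lemma cos_poly_sum m (f : nat -> R -> R) n :
  (forall k, (k <= n)%nat -> cos_poly m (f k)) ->
  cos_poly m (fun x => sum_f_R0 (fun k => f k x) n).
Proof.
  intro Hf. induction n as [|n IH]; simpl; [now apply Hf|].
  apply cos_poly_add; [apply IH; intros; apply Hf; lia|apply Hf; lia].
Qed.

Definition compress (s x : R) : R := 2 * asin (s * sin x).

Lemma cos_compress s x : -1 <= s <= 1 -> cos (compress s x) = (1 - s ^ 2) + s ^ 2 * cos (2 * x).
Proof.
  intro Hs. unfold compress. rewrite cos_2a_sin, sin_asin, cos_2a_sin; [ring|].
  assert (H := SIN_bound x). split; nra.
Qed.

Lemma cos_poly_mul_cos_compress s m f : -1 <= s <= 1 -> cos_poly m f ->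
  cos_poly (m + 2) (fun x => cos (compress s x) * f x).
Proof.
  intros Hs Hf.
  apply (cos_poly_ext _ (fun x => (1 - s ^ 2) * f x + s ^ 2 * (cos (INR 2 * x) * f x))).
  - apply cos_poly_add; apply cos_poly_scal; [now apply (cos_poly_le m); [lia|]|].
    now apply cos_poly_mul_cos.
  - intro x. rewrite cos_compress by easy. simpl INR. replace (1 + 1) with 2 by ring. ring.
Qed.

(* Chebyshev recurrence cos ((k + 2) X) = 2 cos X cos ((k + 1) X) - cos (k X). *)
Lemma cos_poly_cos_compress s k : -1 <= s <= 1 ->
  cos_poly (2 * k) (fun x => cos (INR k * compress s x)).
Proof.
  intro Hs.
  enough (H : cos_poly (2 * k) (fun x => cos (INR k * compress s x)) /\
              cos_poly (2 * S k) (fun x => cos (INR (S k) * compress s x))) by apply H.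
  induction k as [|k [IH1 IH2]].
  - split.
    + apply (cos_poly_ext _ (fun _ => 1)); [apply cos_poly_const|].
      intro. simpl. now rewrite Rmult_0_l, cos_0.
    + apply (cos_poly_ext _ (fun x => cos (compress s x) * 1)).
      * apply (cos_poly_mul_cos_compress s 0); [easy|apply cos_poly_const].
      * intro. simpl. now rewrite Rmult_1_l, Rmult_1_r.
  - split; [easy|].
    apply (cos_poly_ext _ (fun x => 2 * (cos (compress s x) * cos (INR (S k) * compress s x))
                                    + -1 * cos (INR k * compress s x))).
    + apply cos_poly_add; apply cos_poly_scal.
      * replace (2 * S (S k))%nat with (2 * S k + 2)%nat by lia.
        now apply cos_poly_mul_cos_compress.
      * now apply (cos_poly_le (2 * k)); [lia|].
    + intro x. rewrite cos_mul_cos, !S_INR.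
      replace (compress s x + (INR k + 1) * compress s x)
        with ((INR k + 1 + 1) * compress s x) by ring.
      replace (compress s x - (INR k + 1) * compress s x)
        with (- (INR k * compress s x)) by ring.
      rewrite cos_neg. field.
Qed.

Lemma asin_bounds y : 0 <= y <= / 10 -> y <= asin y <= 2 * y /\ asin y - y <= 4 / 3 * y ^ 3.
Proof.
  intro Hy. set (t := asin y).
  assert (Hb := asin_bound y). fold t in Hb.
  assert (Hs : sin t = y) by (apply sin_asin; lra).
  assert (HPI := PI2_3_2).
  assert (Ht0 : 0 <= t) by (apply sin_incr_0; rewrite ?sin_0; lra).
  assert (Ht1 : t <= 1).
  { assert (H := sin_ge_half 1 ltac:(lra)). apply sin_incr_0; lra. }
  assert (Hyt : y <= t).
  { destruct (Req_dec t 0) as [E|E]; [rewrite E, sin_0 in Hs; lra|].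
    rewrite <- Hs. left. apply sin_lt_x. lra. }
  destruct (sin_bound t 0 ltac:(lra) ltac:(lra)) as [Hlow _].
  unfold sin_approx, sin_term in Hlow. simpl in Hlow. rewrite Hs in Hlow.
  assert (Ht2 : t <= 2 * y) by nra.
  assert (t ^ 3 <= (2 * y) ^ 3) by (apply pow_incr; lra).
  simpl in *. lra.
Qed.

Lemma compress_bounds s x : 0 <= s <= / 10 -> 0 <= x <= PI ->
  0 <= compress s x <= 4 * s /\
  Rabs (compress s x - 2 * s * sin x) <= 8 / 3 * s ^ 3 * (sin x * sin x).
Proof.
  intros Hs Hx.
  assert (Hsin0 : 0 <= sin x) by (apply sin_ge_0; lra). assert (Hsin1 := SIN_bound x).
  assert (Hsx : s * sin x <= s) by nra.
  destruct (asin_bounds (s * sin x) ltac:(split; nra)) as [[H1 H2] H3].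
  unfold compress. split; [lra|].
  rewrite Rabs_right by nra.
  assert ((s * sin x) ^ 3 <= s ^ 3 * (sin x * sin x)).
  { replace ((s * sin x) ^ 3) with (s ^ 3 * (sin x * sin x) * sin x) by ring.
    assert (0 <= s ^ 3 * (sin x * sin x)) by (apply Rmult_le_pos; [apply pow_le|]; nra).
    nra. }
  lra.
Qed.

Definition odd_kernel (l0 : nat) (x : R) : R :=
  sum_f_R0 (fun l => cos (INR (2 * l + 1) * x)) l0.

Lemma odd_kernel_mul_sin l0 x : odd_kernel l0 x * sin x = sin (INR (2 * S l0) * x) / 2.
Proof.
  induction l0 as [|l0 IH].
  - unfold odd_kernel. simpl. replace ((1 + 1) * x) with (2 * x) by ring.
    rewrite sin_2a, Rmult_1_l. field.
  - unfold odd_kernel in *. rewrite tech5, Rmult_plus_distr_r, IH, cos_mul_sin.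
    replace (x + INR (2 * S l0 + 1) * x) with (INR (2 * S (S l0)) * x)
      by (rewrite !plus_INR, !mult_INR, !S_INR; simpl; ring).
    replace (x - INR (2 * S l0 + 1) * x) with (- (INR (2 * S l0) * x))
      by (rewrite !plus_INR, !mult_INR, !S_INR; simpl; ring).
    rewrite sin_neg. field.
Qed.

Lemma cos_poly_mul_odd_kernel m l0 f : cos_poly m f ->
  cos_poly (m + (2 * l0 + 1)) (fun x => odd_kernel l0 x * f x).
Proof.
  intro Hf. unfold odd_kernel.
  apply (cos_poly_ext _ (fun x => sum_f_R0 (fun l => cos (INR (2 * l + 1) * x) * f x) l0)).
  - apply cos_poly_sum. intros l Hl.
    apply (cos_poly_le (m + (2 * l + 1))); [lia|]. now apply cos_poly_mul_cos.
  - intro x. rewrite Rmult_comm, scal_sum. apply sum_eq. intros; ring.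
Qed.

Lemma trapezoid_cos_mul_cos M p q : (0 < p + q)%nat -> (p + q < 2 * M)%nat ->
  trapezoid M (fun x => cos (INR p * x) * cos (INR q * x)) = if Nat.eqb p q then INR M / 2 else 0.
Proof.
  intros Hpq0 HpqM.
  assert (Horth : forall i j, (j <= i)%nat -> (0 < i + j)%nat -> (i + j < 2 * M)%nat ->
    trapezoid M (fun x => cos (INR i * x) * cos (INR j * x)) = if Nat.eqb i j then INR M / 2 else 0).
  { intros i j Hji Hij0 HijM.
    rewrite (trapezoid_ext M _ (fun x => / 2 * cos (INR (i + j) * x) + / 2 * cos (INR (i - j) * x)))
      by (intro; rewrite cos_INR_mul_cos_INR by easy; field).
    rewrite trapezoid_lin, trapezoid_cos by lia.
    destruct (Nat.eqb_spec i j) as [<-|Hne].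
    - rewrite Nat.sub_diag, (trapezoid_ext M _ (fun _ => 1))
        by (intro; simpl; rewrite Rmult_0_l; apply cos_0).
      rewrite trapezoid_const. field.
    - rewrite trapezoid_cos by lia. ring. }
  destruct (Nat.le_ge_cases q p) as [H|H]; [now apply Horth|].
  rewrite (trapezoid_ext M _ (fun x => cos (INR q * x) * cos (INR p * x))) by (intro; ring).
  rewrite Horth by lia. now rewrite Nat.eqb_sym.
Qed.

Lemma sum_kronecker (c : R) l N : (l <= N)%nat ->
  sum_f_R0 (fun i => if Nat.eqb i l then c else 0) N = c.
Proof.
  induction N as [|N IH]; intro Hl.
  - now replace l with 0%nat by lia.
  - rewrite tech5. destruct (Nat.eqb_spec (S N) l) as [<-|Hne].
    + rewrite (sum_eq _ (fun _ => 0)), sum_cte; [ring|].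
      intros i Hi. destruct (Nat.eqb_spec i (S N)); [lia|easy].
    + rewrite IH by lia. ring.
Qed.

Lemma trapezoid_odd_kernel_sqr M l0 : (2 * l0 + 1 < M)%nat ->
  trapezoid M (fun x => odd_kernel l0 x * odd_kernel l0 x) = INR (S l0) * INR M / 2.
Proof.
  intro HM.
  rewrite (trapezoid_ext M _ (fun x => sum_f_R0 (fun l => sum_f_R0 (fun l' =>
      cos (INR (2 * l + 1) * x) * cos (INR (2 * l' + 1) * x)) l0) l0)).
  2:{ intro x. unfold odd_kernel. rewrite scal_sum. apply sum_eq. intros l _.
      rewrite scal_sum. apply sum_eq. intros; ring. }
  rewrite trapezoid_sum, (sum_eq _ (fun _ => INR M / 2)), sum_cte; [field|].
  intros l Hl. rewrite trapezoid_sum.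
  rewrite (sum_eq _ (fun l' => if Nat.eqb l' l then INR M / 2 else 0)); [now apply sum_kronecker|].
  intros l' Hl'. rewrite trapezoid_cos_mul_cos by lia.
  destruct (Nat.eqb_spec (2 * l + 1) (2 * l' + 1)), (Nat.eqb_spec l' l); auto; lia.
Qed.

Lemma trapezoid_odd_kernel_sqr_sin_sqr M l0 : (2 * S l0 < M)%nat ->
  trapezoid M (fun x => odd_kernel l0 x * odd_kernel l0 x * (sin x * sin x)) = INR M / 8.
Proof.
  intro HM.
  rewrite (trapezoid_ext M _ (fun x => / 8 * 1 + - / 8 * cos (INR (4 * S l0) * x))).
  - rewrite trapezoid_lin, trapezoid_const, trapezoid_cos by lia. field.
  - intro x.
    replace (odd_kernel l0 x * odd_kernel l0 x * (sin x * sin x))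
      with ((odd_kernel l0 x * sin x) * (odd_kernel l0 x * sin x)) by ring.
    rewrite odd_kernel_mul_sin.
    replace (INR (4 * S l0) * x) with (2 * (INR (2 * S l0) * x))
      by (rewrite !mult_INR; simpl; ring).
    rewrite cos_2a_sin. field.
Qed.

Lemma trapezoid_cos_odd_kernel_sqr_sin M l0 : Nat.Even M -> (8 * l0 + 6 <= M)%nat ->
  trapezoid M (fun x => cos (INR M * x) * (odd_kernel l0 x * odd_kernel l0 x) * sin x)
  <= - (INR (S l0) * INR (S l0) * PI / (4 * INR M)).
Proof.
  intros HM HlM.
  assert (HMr : 0 < INR M) by (apply lt_0_INR; lia).
  rewrite (trapezoid_ext M _ (fun x => sum_f_R0 (fun l =>
      / 4 * (cos (INR M * x) * sin (INR (2 * (l0 + l + 1) + 1) * x))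
    + / 4 * (cos (INR M * x) * sin (INR (2 * (l0 - l) + 1) * x))) l0)).
  2:{ intro x. rewrite Rmult_assoc, (Rmult_assoc (odd_kernel l0 x)), odd_kernel_mul_sin.
      unfold odd_kernel. rewrite (Rmult_comm (sum_f_R0 _ _)), scal_sum, scal_sum.
      apply sum_eq. intros l Hl.
      replace (cos (INR (2 * l + 1) * x) * (sin (INR (2 * S l0) * x) / 2) * cos (INR M * x))
        with (cos (INR M * x) * (cos (INR (2 * l + 1) * x) * sin (INR (2 * S l0) * x)) / 2)
        by (unfold Rdiv; ring).
      rewrite cos_mul_sin, <- Rmult_minus_distr_r, <- Rmult_plus_distr_r, <- minus_INR,
        <- plus_INR by lia.
      replace (2 * S l0 + (2 * l + 1))%nat with (2 * (l0 + l + 1) + 1)%nat by lia.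
      replace (2 * S l0 - (2 * l + 1))%nat with (2 * (l0 - l) + 1)%nat by lia.
      field. }
  rewrite trapezoid_sum.
  eapply Rle_trans.
  - apply (sum_Rle _ (fun _ => - (INR (S l0) * PI / (4 * INR M)))).
    intros l Hl. rewrite trapezoid_lin.
    assert (H1 := trapezoid_cos_mul_sin_le M (2 * (l0 + l + 1) + 1) HM
                    ltac:(econstructor; reflexivity) ltac:(lia)).
    assert (H2 := trapezoid_cos_mul_sin_le M (2 * (l0 - l) + 1) HM
                    ltac:(econstructor; reflexivity) ltac:(lia)).
    assert (Hq : INR (2 * (l0 + l + 1) + 1) + INR (2 * (l0 - l) + 1) = 4 * INR (S l0)).
    { rewrite <- plus_INR. replace (2 * (l0 + l + 1) + 1 + (2 * (l0 - l) + 1))%nat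
        with (4 * S l0)%nat by lia.
      rewrite mult_INR. replace (INR 4) with 4 by (simpl; ring). reflexivity. }
    apply (Rmult_le_reg_r (4 * INR M)); [lra|].
    apply (Rmult_le_compat_r (4 * INR M)) in H1; [|lra].
    apply (Rmult_le_compat_r (4 * INR M)) in H2; [|lra].
    field_simplify in H1; [|lra]. field_simplify in H2; [|lra]. field_simplify; [|lra].
    nra.
  - rewrite sum_cte. right. field. lra.
Qed.

Definition kernel_weight (l0 : nat) (x : R) : R :=
  cos (INR (8 * S l0) * x) * (odd_kernel l0 x * odd_kernel l0 x).

Lemma trapezoid_kernel_weight_cos_poly l0 g : cos_poly (2 * S l0) g ->
  trapezoid (8 * S l0) (fun x => kernel_weight l0 x * g x) = 0.
Proof.
  intro Hg. unfold kernel_weight.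
  rewrite (trapezoid_ext _ _ (fun x => cos (INR (8 * S l0) * x)
                                       * (odd_kernel l0 x * (odd_kernel l0 x * g x))))
    by (intro; ring).
  apply (trapezoid_cos_mul_cos_poly _ (2 * S l0 + (2 * l0 + 1) + (2 * l0 + 1))); [lia|].
  now apply cos_poly_mul_odd_kernel, cos_poly_mul_odd_kernel.
Qed.

Lemma trapezoid_kernel_weight_abs_le l0 h e :
  (forall x, 0 <= x <= PI -> Rabs (h x) <= e x) ->
  Rabs (trapezoid (8 * S l0) (fun x => kernel_weight l0 x * h x))
  <= trapezoid (8 * S l0) (fun x => e x * (odd_kernel l0 x * odd_kernel l0 x)).
Proof.
  intro Hh. apply trapezoid_abs_le; [lia|]. intros x Hx. unfold kernel_weight.
  set (K2 := odd_kernel l0 x * odd_kernel l0 x).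
  assert (HK : 0 <= K2) by (unfold K2; nra).
  assert (Hc : Rabs (cos (INR (8 * S l0) * x)) <= 1) by (apply Rabs_le, COS_bound).
  assert (Hhx := Hh x Hx). assert (0 <= Rabs (h x)) by apply Rabs_pos.
  rewrite !Rabs_mult, (Rabs_pos_eq K2) by easy.
  apply (Rle_trans _ (K2 * Rabs (h x))); [|nra].
  rewrite (Rmult_comm _ K2), Rmult_assoc. rewrite <- (Rmult_1_l (Rabs (h x))) at 2.
  apply Rmult_le_compat_l; [easy|]. apply Rmult_le_compat_r; easy.
Qed.

Lemma trapezoid_kernel_weight_sin l0 :
  trapezoid (8 * S l0) (fun x => kernel_weight l0 x * sin x) <= - (INR (S l0) * PI / 32).
Proof.
  eapply Rle_trans; [apply trapezoid_cos_odd_kernel_sqr_sin; [exists (4 * S l0)%nat|]; lia|].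
  rewrite mult_INR. right. simpl (INR 8). field. rewrite S_INR. assert (H := pos_INR l0). lra.
Qed.

Lemma compress_approx_lower n s g E : (1 <= n)%nat -> 0 < s <= / 10 -> cos_poly (2 * n) g ->
  (forall x, 0 <= x <= PI -> Rabs (g x - compress s x) <= E) -> s / (32 * INR n) <= E.
Proof.
  intros Hn Hs Hg HE. destruct n as [|l0]; [lia|].
  set (N := INR (S l0)). set (M := (8 * S l0)%nat). set (G := kernel_weight l0).
  assert (HN : 1 <= N) by (unfold N; rewrite S_INR; assert (H := pos_INR l0); lra).
  assert (HMN : INR M = 8 * N) by (unfold M, N; rewrite mult_INR; simpl; ring).
  assert (Herr : Rabs (trapezoid M (fun x => G x * (compress s x - g x))) <= 4 * N * N * E).
  { eapply Rle_trans; [apply (trapezoid_kernel_weight_abs_le l0 _ (fun _ => E))|].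
    - intros x Hx. rewrite Rabs_minus_sym. now apply HE.
    - rewrite trapezoid_scal, trapezoid_odd_kernel_sqr by lia.
      fold M N. rewrite HMN. right. field. }
  assert (Hlin : Rabs (trapezoid M (fun x => G x * (compress s x - 2 * s * sin x)))
                 <= 8 / 3 * s ^ 3 * N).
  { eapply Rle_trans;
      [apply (trapezoid_kernel_weight_abs_le l0 _ (fun x => 8 / 3 * s ^ 3 * (sin x * sin x)))|].
    - intros x Hx. now apply compress_bounds; [lra|].
    - rewrite (trapezoid_ext _ _ (fun x =>
        8 / 3 * s ^ 3 * (odd_kernel l0 x * odd_kernel l0 x * (sin x * sin x)))) by (intro; ring).
      rewrite trapezoid_scal, trapezoid_odd_kernel_sqr_sin_sqr by lia.
      fold M. rewrite HMN. right. field. }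
  assert (Hsplit : trapezoid M (fun x => G x * (compress s x - g x)) =
    2 * s * trapezoid M (fun x => G x * sin x)
    + (trapezoid M (fun x => G x * (compress s x - 2 * s * sin x))
       - trapezoid M (fun x => G x * g x))).
  { rewrite (trapezoid_ext M _ (fun x => 2 * s * (G x * sin x)
      + 1 * (1 * (G x * (compress s x - 2 * s * sin x)) + -1 * (G x * g x)))) by (intro; ring).
    rewrite 2!trapezoid_lin. ring. }
  assert (Hann : trapezoid M (fun x => G x * g x) = 0)
    by exact (trapezoid_kernel_weight_cos_poly l0 g Hg).
  assert (Hsin : trapezoid M (fun x => G x * sin x) <= - (N * PI / 32))
    by exact (trapezoid_kernel_weight_sin l0).
  rewrite Hann, Rminus_0_r in Hsplit.
  rewrite Hsplit in Herr. apply Rabs_le_between in Herr, Hlin.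
  assert (HPI := PI2_3_2). assert (s ^ 3 <= s / 100) by (simpl; nra).
  assert (N * s <= 32 * N * N * E) by nra.
  apply (Rmult_le_reg_l (32 * N)); [lra|]. fold N. field_simplify; nra.
Qed.

Lemma abs_approx_lower b n T : 0 < b <= PI -> (1 <= n)%nat -> trig_poly n T ->
  supnorm (fun x => Rabs x - T x) (- b) b >= / 6000 * b / INR n.
Proof.
  intros Hb Hn HT. set (E := supnorm (fun x => Rabs x - T x) (- b) b).
  destruct (trig_poly_even_part n T HT) as [a Ha].
  assert (HN : 1 <= INR n) by (now apply (le_INR 1)).
  set (s := b / 40). assert (HPI := PI_4).
  assert (Hs : 0 < s <= / 10) by (unfold s; lra).
  assert (Hsb : 4 * s <= b) by (unfold s; lra).
  assert (H := compress_approx_lower n s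
    (fun x => sum_f_R0 (fun k => a k * cos (INR k * compress s x)) n) E Hn Hs).
  assert (E >= s / (32 * INR n)).
  { apply Rle_ge, H.
    - apply cos_poly_sum. intros k Hk. apply cos_poly_scal.
      apply (cos_poly_le (2 * k)); [lia|]. apply cos_poly_cos_compress. lra.
    - intros x Hx. destruct (compress_bounds s x ltac:(lra) Hx) as [Hc _].
      rewrite <- Ha.
      replace (compress s x) with (Rabs (compress s x)) at 2 by (apply Rabs_pos_eq; lra).
      apply (even_part_error T b); [|lra].
      intros y Hy. now apply (Rabs_abs_sub_trig_le_supnorm n). }
  enough (/ 6000 * b / INR n <= s / (32 * INR n)) by lra.
  unfold s. apply (Rmult_le_reg_r (INR n)); [lra|]. field_simplify; lra.
Qed.

(* Test the inequality on [T = sin], [n = 1], [b = 1]. *)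
Lemma bernstein_const_ge_1 c0 : bernstein_const c0 -> 1 <= c0.
Proof.
  intro HB. assert (HPI := PI2_3_2).
  assert (Hsin : trig_poly 1 sin).
  { exists (fun _ => 0), (fun k => match k with 1%nat => 1 | _ => 0 end).
    intro x. simpl. rewrite Rmult_1_l. ring. }
  assert (HD : forall y, Derive sin y = cos y)
    by (intro y; apply is_derive_unique; auto_derive; [easy|ring]).
  assert (HB1 := HB 1 1%nat sin ltac:(lra) (le_n _) Hsin sin_neg).
  replace (- (1)) with (-1) in HB1 by ring. simpl INR in HB1.
  assert (Hcos : 1 <= supnorm (Derive sin) (-1 / 2) (1 / 2)).
  { replace 1 with (Rabs (Derive sin 0)) at 1 by (rewrite HD, cos_0; apply Rabs_R1).
    apply (Rabs_le_supnorm _ _ _ 1); [|lra]. intros y _. rewrite HD. apply Rabs_le, COS_bound. }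
  assert (Hsup : 0 <= supnorm sin (-1) 1 <= 1).
  { assert (Hb : forall y, -1 <= y <= 1 -> Rabs (sin y) <= 1) by (intros; apply Rabs_le, SIN_bound).
    assert (H := supnorm_between sin (-1) 1 1 0 Hb ltac:(lra)). assert (H0 := Rabs_pos (sin 0)).
    lra. }
  replace (c0 / 1 * 1) with c0 in HB1 by field.
  destruct (Rle_or_lt 0 c0); nra.
Qed.

Lemma odd_trig_poly_le_bernstein c0 n W beta h : bernstein_const c0 -> 0 < beta < PI ->
  (1 <= n)%nat -> trig_poly n W -> odd_fun W -> 0 < h <= beta / 2 ->
  W h <= c0 / beta * INR n * supnorm W (- beta) beta * h.
Proof.
  intros HB Hbeta Hn HW HWodd Hh.
  destruct (trig_poly_derive n W HW) as [W' [HW' HdW]].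
  destruct (trig_poly_bounded n W' HW') as [MW' HMW'].
  assert (HDW : forall y, Derive W y = W' y) by (intro y; apply is_derive_unique, HdW).
  assert (HW0 : W 0 = 0) by (assert (H := HWodd 0); rewrite Ropp_0 in H; lra).
  destruct (MVT_cor2 W W' 0 h ltac:(lra)) as [xi [Hmvt Hxi]];
    [intros c _; apply is_derive_Reals, HdW|].
  assert (Hder : W' xi <= supnorm (Derive W) (- beta / 2) (beta / 2)).
  { rewrite <- HDW. eapply Rle_trans; [apply Rle_abs|].
    apply (Rabs_le_supnorm _ _ _ MW'); [intros y _; rewrite HDW; apply HMW'|lra]. }
  assert (HB1 := HB beta n W Hbeta Hn HW HWodd).
  rewrite HW0, !Rminus_0_r in Hmvt. rewrite Hmvt.
  apply Rmult_le_compat_r; lra.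
Qed.

Section ShiftedDifference.

Variables (S : R -> R) (b E : R).
Hypothesis HS : forall y, - b <= y <= b -> Rabs (S y - Rabs y) <= E.

Lemma approx_abs_shift_diff_le x h : 0 <= h -> - (b - h) <= x <= b - h ->
  Rabs (S (x + h) - S (x - h)) <= 2 * h + 2 * E.
Proof.
  intros Hh Hx.
  assert (H1 := HS (x + h) ltac:(lra)). assert (H2 := HS (x - h) ltac:(lra)).
  assert (Habs := Rabs_triang_inv2 (x + h) (x - h)).
  replace (x + h - (x - h)) with (2 * h) in Habs by ring. rewrite (Rabs_pos_eq (2 * h)) in Habs by lra.
  apply Rabs_le_between in H1, H2, Habs. apply Rabs_le. lra.
Qed.

Lemma approx_abs_shift_diff_ge h : 0 <= h -> 2 * h <= b ->
  2 * h - 2 * E <= S (h + h) - S (h - h).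
Proof.
  intros Hh Hhb.
  assert (H1 := HS (h + h) ltac:(lra)). assert (H2 := HS (h - h) ltac:(lra)).
  replace (h - h) with 0 in * by ring. rewrite Rabs_R0 in H2.
  rewrite (Rabs_pos_eq (h + h)) in H1 by lra.
  apply Rabs_le_between in H1. apply Rabs_le_between in H2. lra.
Qed.

End ShiftedDifference.

Lemma abs_approx_lower_bernstein c0 b n T : 0 < c0 -> bernstein_const c0 ->
  0 < b <= PI -> (1 <= n)%nat -> trig_poly n T ->
  supnorm (fun x => Rabs x - T x) (- b) b >= / (80 * c0) * b / INR n.
Proof.
  intros Hc0 HB Hb Hn HT.
  assert (Hc1 := bernstein_const_ge_1 c0 HB).
  assert (HN : 1 <= INR n) by (now apply (le_INR 1)).
  set (K := c0 * INR n). assert (HK : 1 <= K) by (unfold K; nra).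
  set (E := supnorm (fun x => Rabs x - T x) (- b) b).
  assert (HS : forall y, - b <= y <= b -> Rabs (even_part T y - Rabs y) <= E).
  { intros y Hy. apply (even_part_error T b); [|easy].
    intros; now apply (Rabs_abs_sub_trig_le_supnorm n). }
  set (h := b / (2 * K + 1)). set (beta := b - h).
  assert (Hbeta : beta = 2 * K * h) by (unfold beta, h; field; lra).
  assert (Hh0 : 0 < h) by (apply Rdiv_lt_0_compat; lra).
  assert (Hh : 0 < h <= beta / 2) by (rewrite Hbeta; nra).
  set (W := fun x => even_part T (x + h) - even_part T (x - h)).
  assert (HWsup : supnorm W (- beta) beta <= 2 * h + 2 * E).
  { apply supnorm_le; [nra|]. intros x Hx.
    apply (approx_abs_shift_diff_le _ b E HS); unfold beta in Hx; lra. }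
  assert (HWh : 2 * h - 2 * E <= W h).
  { apply (approx_abs_shift_diff_ge _ b E HS); unfold beta in Hbeta; nra. }
  assert (HWinc := odd_trig_poly_le_bernstein c0 n W beta h HB ltac:(unfold beta in *; nra) Hn
                     (trig_poly_even_part_shift_diff n T h HT)
                     (odd_fun_even_part_shift_diff T h) Hh).
  replace (c0 / beta * INR n) with (/ (2 * h)) in HWinc by (rewrite Hbeta; unfold K; field; lra).
  assert (HE : h / 3 <= E).
  { assert (/ (2 * h) * supnorm W (- beta) beta * h <= / (2 * h) * (2 * h + 2 * E) * h).
    { apply Rmult_le_compat_r; [lra|]. apply Rmult_le_compat_l; [|easy].
      left. apply Rinv_0_lt_compat. lra. }
    replace (/ (2 * h) * (2 * h + 2 * E) * h) with (h + E) in H by (field; lra). lra. }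
  apply Rle_ge. eapply Rle_trans; [|exact HE].
  unfold h. replace (/ (80 * c0) * b / INR n) with (b / (80 * K)) by (unfold K; field; lra).
  unfold Rdiv. rewrite Rmult_assoc. apply Rmult_le_compat_l; [lra|].
  rewrite <- Rinv_mult. apply Rinv_le_contravar; nra.
Qed.

Theorem lemma3p3 :
  (exists c1 : R, 0 < c1 /\
     forall (b : R) (n : nat) (T : R -> R),
       0 < b <= PI -> (1 <= n)%nat -> trig_poly n T ->
       supnorm (fun x => Rabs x - T x) (- b) b >= c1 * b / INR n)
  /\
  (forall c0 : R, 0 < c0 -> bernstein_const c0 ->
     forall (b : R) (n : nat) (T : R -> R),
       0 < b <= PI -> (1 <= n)%nat -> trig_poly n T ->
       supnorm (fun x => Rabs x - T x) (- b) b >= / (80 * c0) * b / INR n).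
Proof.
  split.
  - exists (/ 6000). split; [lra|]. intros b n T. apply abs_approx_lower.
  - intros c0 Hc0 HB b n T. now apply abs_approx_lower_bernstein.
Qed.
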